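(* Let $(x''_n)_n=((x_n,x'_n))_n$ be a sequence in $G''=G\times G'$ with $d(x_n,o)\to\infty$ and $d'(x'_n,o')\to\infty$. Then, after passing to a subsequence, the perturbed diamonds $D_n(x''_n)$ converge in the Fell topology to either $\emptyset$, or $G''$, or a set $C$ for which there exist $\theta\in\partial G$, $\theta'\in\partial G'$ and $\delta\in\mathbb R$ with $$HB((\theta,\theta'),\delta-2/c)\subseteq C\subseteq HB((\theta,\theta'),\delta+1/c),$$ where these are horoballs of $(G'',\rho_c)$ (so in particular of type II, with the same center).
   Context: $G,G'$ are finitely generated groups with neutral elements $o,o'$, word metrics $d,d'$ from Cayley graphs with respect to finite generating sets, ball volumes $v_n,v'_n$, growth rates $a=\lim v_n^{1/n}>1$, $a'=\lim (v'_n)^{1/n}>1$, and $c:=\log a/\log a'$. $G''=G\times G'$ has origin $o''=(o,o')$ and metric $\rho_c((x,x'),(y,y'))=d(x,y)+d'(x',y')/c$. Fix a non-decreasing $f:\mathbb Z_{\ge0}\to\mathbb Z_{\ge0}$ and a strictly increasing sequence $(r_j)$ in $\mathbb Z_{\ge 0}$ such that $f(0)=0$, with $r'_j:=f(r_j)$ one has $0<\inf_n v'_{r'_n}/v_{r_n}\le\sup_n v'_{r'_n}/v_{r_n}<\infty$, and $\forall m\,\exists N\,\forall n\ge N: |f(n+m)-f(n)-cm|\le1$ (such $f,(r_j)$ exist). The perturbed diamond with parameter $n$ and center $x''=(x,x')$ is $D_n(x''):=\bigcup_{t=0}^{r_n}\{(y,y'): d(x,y)=r_n-t,\ d'(x',y')\le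 f(t)\}$. Fell convergence of subsets $S_n\to S$ of the countable set $G''$ means pointwise convergence of indicator functions. Horoboundary of a countable set $H$ with origin $o_H$ and boundedly finite metric $\rho$: with $\rho_x(y)=\rho(x,y)-\rho(x,o_H)$, $\overline H$ is the closure of $\{\rho_x\}$ in the pointwise topology among $1$-Lipschitz functions vanishing at $o_H$, $\partial H=\overline H\setminus H$, and for $\theta\in\partial H$ with function $d_\theta$, the horoball is $HB(\theta,\delta):=\{x: d_\theta(x)\le\delta\}$. For $\theta\in\partial G$, $\theta'\in\partial G'$, $(\theta,\theta')$ denotes the point of $\partial G''$ given by the function $(y,y')\mapsto d_\theta(y)+d_{\theta'}(y')/c$; horoballs centered at such points are called of type II. *)

From Stdlib Require Import Reals ClassicalEpsilon.
From Coquelicot Require Import Coquelicot.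
From mathcomp Require Import all_boot.

Set Implicit Arguments.
Unset Strict Implicit.
Unset Printing Implicit Defensive.

Section WordMetric.
Variable G : groupType.

Definition gens (S : seq G) : seq G := S ++ map (@monoid.inv G) S.

Fixpoint words (A : seq G) (n : nat) : seq (seq G) :=
  if n is k.+1 then [seq a :: w | a <- A, w <- words A k] else [:: [::]].

Definition wprod (w : seq G) : G := foldr (@monoid.mul G) (@monoid.one G) w.

Definition reach (S : seq G) (g : G) (n : nat) : bool :=
  has (fun w => wprod w == g) (words (gens S) n).

Definition generates (S : seq G) : Prop := forall g : G, exists n, reach S g n.

(* word length |g|_S : least length of a word representing g (0 if none) *)
Definition word_len (S : seq G) (g : G) : nat :=
  match excluded_middle_informative (exists n, reach S g n) with
  | left h => ex_minn h
  | right _ => 0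
  end.

Definition word_dist (S : seq G) (x y : G) : nat :=
  word_len S (monoid.mul (monoid.inv x) y).

(* v_n = number of elements of the ball of radius n about the neutral
   element, i.e. of distinct values of words of length <= n *)
Definition ball_vol (S : seq G) (n : nat) : nat :=
  size (undup (flatten [seq map wprod (words (gens S) k) | k <- iota 0 n.+1])).

Local Open Scope R_scope.

Definition growth_rate (S : seq G) (a : R) : Prop :=
  is_lim_seq (fun n => Rpower (INR (ball_vol S n)) (/ INR n)) a.

End WordMetric.

Section Horo.
Variable H : Type.
Local Open Scope R_scope.

Definition busemann (m : H -> H -> R) (o x : H) : H -> R :=
  fun y => m x y - m x o.

(* h lies in the closure (pointwise topology) of {rho_x}, among
   1-Lipschitz functions vanishing at o *)
Definition in_horo_closure (m : H -> H -> R) (o : H) (h : H -> R) : Prop :=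
  (forall y z, Rabs (h y - h z) <= m y z) /\ h o = 0 /\
  (forall (F : list H) (eps : R), 0 < eps ->
     exists x, forall y, List.In y F -> Rabs (busemann m o x y - h y) < eps).

Definition horo_boundary (m : H -> H -> R) (o : H) (h : H -> R) : Prop :=
  in_horo_closure m o h /\ ~ (exists x, forall y, h y = busemann m o x y).

Definition horoball (h : H -> R) (delta : R) : H -> Prop :=
  fun y => h y <= delta.

(* Fell convergence of subsets of a countable set: pointwise convergence
   of indicator functions *)
Definition fell_conv (Sn : nat -> H -> Prop) (S : H -> Prop) : Prop :=
  forall z, exists N, forall n, (N <= n)%nat -> (Sn n z <-> S z).

End Horo.

Local Open Scope R_scope.
Definition rho_c (G G' : groupType) (S : seq G) (S' : seq G') (c : R)
  (p q : G * G') : R :=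
  INR (word_dist S p.1 q.1) + INR (word_dist S' p.2 q.2) / c.

Definition diamond (G G' : groupType) (S : seq G) (S' : seq G')
  (f : nat -> nat) (r : nat) (p : G * G') : G * G' -> Prop :=
  fun q => exists t, (t <= r)%nat /\ word_dist S p.1 q.1 = (r - t)%nat /\
                     (word_dist S' p.2 q.2 <= f t)%nat.

Definition pair_horo (G G' : Type) (c : R) (th : G -> R) (th' : G' -> R) :
  G * G' -> R := fun q => th q.1 + th' q.2 / c.

From Stdlib Require Import Reals ClassicalEpsilon Lia Lra ZArith IndefiniteDescription.
From Coquelicot Require Import Coquelicot.
From mathcomp Require Import all_boot zify.

(* Pass to a subsequence along which the Busemann functions b_n of x_n and b'_n
   of x'_n converge pointwise and the diamonds D_n converge in the Fell topology:
   a diagonal argument, since every quantity involved is a bounded natural number.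
   Write s_n = r_n - |x_n| (the slack) and u_n = f(s_n) - |x'_n| (the depth).
   If s_n stays bounded along a further subsequence, the fibre radii
   f(r_n - d(x_n, y)) stay bounded while |x'_n| -> oo, so the limit is empty.
   If s_n -> oo, quasi-linearity of f gives f(r_n - d(x_n, y)) = f(s_n) - c b_n(y)
   up to an error of 1, so (y, y') lies in D_n exactly when
   c b_n(y) + b'_n(y') <= u_n, up to an error of 1.  According as u_n tends to
   +oo or -oo or is constant along a subsequence, the limit is everything, empty,
   or squeezed between two horoballs centred at (theta, theta'). *)

Section WordMetric.
Context {G : groupType} {S : seq G} (hS : generates S).
Local Notation d := (word_dist S).
Local Open Scope nat_scope.

Lemma mem_words (A : seq G) n w :
  (w \in words A n) = (size w == n) && all (mem A) w.
Proof.
elim: n w => [|n IH] w /=; first by rewrite inE; case: w.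
apply/allpairsP/idP => [[[b u] /= [hb hu ->]]|].
  by rewrite /= eqSS hb -IH.
case: w => [//|b u] /andP[hs /andP[hb hu]].
by exists (b, u); rewrite /= IH -eqSS hs.
Qed.

Lemma reachP g n :
  reflect (exists2 w : seq G, size w = n /\ all (mem (gens S)) w & wprod w = g)
          (reach S g n).
Proof.
apply: (iffP hasP) => [[w]|[w [sw aw] wg]].
  by rewrite mem_words => /andP[/eqP sw aw] /eqP wg; exists w.
by exists w; [rewrite mem_words sw eqxx | apply/eqP].
Qed.

Lemma wprod_cat (w1 w2 : seq G) :
  wprod (w1 ++ w2) = monoid.mul (wprod w1) (wprod w2).
Proof. by elim: w1 => [|b w IH] /=; rewrite ?mul1g // IH mulgA. Qed.

Lemma wprod_rev_inv (w : seq G) :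
  wprod (rev (map (@monoid.inv G) w)) = monoid.inv (wprod w).
Proof.
elim: w => [|b w IH] /=; first by rewrite invg1.
by rewrite rev_cons -cats1 wprod_cat IH /= mulg1 invgM.
Qed.

Lemma mem_gens_inv b : b \in gens S -> monoid.inv b \in gens S.
Proof.
rewrite !mem_cat => /orP[hb|/mapP[b' hb' ->]]; last by rewrite invgK hb'.
by rewrite (map_f _ hb) orbT.
Qed.

Lemma reach_mul g1 g2 m n :
  reach S g1 m -> reach S g2 n -> reach S (monoid.mul g1 g2) (m + n).
Proof.
move=> /reachP[w1 [<- a1] <-] /reachP[w2 [<- a2] <-].
by apply/reachP; exists (w1 ++ w2); rewrite ?size_cat ?all_cat ?a1 ?a2 ?wprod_cat.
Qed.

Lemma reach_inv g n : reach S g n -> reach S (monoid.inv g) n.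
Proof.
move=> /reachP[w [<- aw] <-]; apply/reachP; exists (rev (map (@monoid.inv G) w)).
  rewrite size_rev size_map all_rev all_map; split=> //.
  by apply/allP=> b /(allP aw)/mem_gens_inv.
by rewrite wprod_rev_inv.
Qed.

Lemma word_len_le g n : reach S g n -> word_len S g <= n.
Proof.
rewrite /word_len; case: excluded_middle_informative => // e.
by case: ex_minnP => m _; apply.
Qed.

Lemma reach_word_len g : reach S g (word_len S g).
Proof.
rewrite /word_len; case: excluded_middle_informative => [e|[]]; last exact: hS.
by case: ex_minnP.
Qed.

Lemma word_dist_xx x : d x x = 0.
Proof.
apply/eqP; rewrite -leqn0; apply: word_len_le; apply/reachP; exists [::] => //.
by rewrite mulVg.
Qed.

Lemma word_dist_triangle x y z : d x z <= d x y + d y z.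
Proof.
apply: word_len_le; have -> : monoid.mul (monoid.inv x) z =
    monoid.mul (monoid.mul (monoid.inv x) y) (monoid.mul (monoid.inv y) z).
  by rewrite -mulgA (mulgA y) mulgV mul1g.
by apply: reach_mul; apply: reach_word_len.
Qed.

Lemma word_dist_sym x y : d x y = d y x.
Proof.
suff le_sym u v : d u v <= d v u by apply/eqP; rewrite eqn_leq !le_sym.
apply: word_len_le; have -> : monoid.mul (monoid.inv u) v =
    monoid.inv (monoid.mul (monoid.inv v) u) by rewrite invgM invgK.
exact/reach_inv/reach_word_len.
Qed.

Lemma word_dist_step_closer x z : 0 < d x z ->
  exists2 s, s \in gens S & d (monoid.mul x s) z < d x z.
Proof.
rewrite /word_dist; have := reach_word_len (monoid.mul (monoid.inv x) z).
case/reachP=> [[|s w]] [sw aw] ew; first by rewrite -sw.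
case/andP: aw => hs aw; exists s => //; rewrite -sw ltnS.
apply: word_len_le; apply/reachP; exists w => //.
by rewrite invgM -mulgA -ew /= mulgA mulVg mul1g.
Qed.

Lemma enum_of_generates : exists e : nat -> G, forall g, exists j, e j = g.
Proof.
exists (fun j => if @unpickle (nat * nat)%type j is Some (n, i)
  then wprod (nth [::] (words (gens S) n) i) else monoid.one) => g.
have [n /hasP[w hw /eqP <-]] := hS g.
by exists (pickle (n, index w (words (gens S) n))); rewrite pickleK nth_index.
Qed.

End WordMetric.

Lemma enum_prod {A B : Type} {eA : nat -> A} {eB : nat -> B} :
  (forall a, exists i, eA i = a) -> (forall b, exists j, eB j = b) ->
  exists e : nat -> A * B, forall ab, exists k, e k = ab.
Proof.
move=> eA_onto eB_onto; exists (fun k => if @unpickle (nat * nat)%type k is Some (i, j)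
  then (eA i, eB j) else (eA 0%N, eB 0%N)) => -[a b].
have [i <-] := eA_onto a; have [j <-] := eB_onto b.
by exists (pickle (i, j)); rewrite pickleK.
Qed.

Lemma mem_In {T : eqType} {s : seq T} {y : T} : y \in s -> List.In y s.
Proof. by elim: s => //= a s IH; rewrite inE => /orP[/eqP->|/IH]; [left|right]. Qed.

Section Subsequences.
Local Open Scope nat_scope.

Lemma eventuallyP (P : nat -> Prop) :
  eventually P <-> exists N, forall n, N <= n -> P n.
Proof. by split=> -[N hN]; exists N => n /leP; apply: hN. Qed.

Lemma homo_ltn_leq_id phi : {homo phi : m n / m < n} -> forall n, n <= phi n.
Proof. by move=> inc; elim=> // n IH; apply: leq_ltn_trans IH (inc _ _ _). Qed.

Lemma eventually_subseq_homo {phi} {P : nat -> Prop} :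
  {homo phi : m n / m < n} -> eventually P -> eventually (fun k => P (phi k)).
Proof. by move=> inc; apply: eventually_subseq => n; apply/ltP/inc. Qed.

Lemma eventually_forall_in {T : Type} (F : list T) (P : nat -> T -> Prop) :
  (forall y, eventually (P^~ y)) -> eventually (fun n => forall y, List.In y F -> P n y).
Proof.
move=> evP; elim: F => [|y F IH]; first exact: filter_forall.
by apply: filter_imp (filter_and _ _ (evP y) IH) => n [Py PF] z /= [<-|/PF].
Qed.

Lemma eventually_forall_leq {P : nat -> nat -> Prop} M :
  (forall m, eventually (P m)) -> eventually (fun n => forall m, m <= M -> P m n).
Proof.
move=> evP; elim: M => [|M IH].
  by apply: filter_imp (evP 0) => n P0n [|m].
apply: filter_imp (filter_and _ _ (evP M.+1) IH) => n [PMn IHn] m.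
by rewrite leq_eqVlt => /orP[/eqP->|/IHn].
Qed.

Lemma subseq_of_frequently (P : nat -> nat -> Prop) :
  (forall k N, exists n, N <= n /\ P k n) ->
  exists2 phi, {homo phi : m n / m < n} & forall k, P k (phi k).
Proof.
move=> freq; have [next nextP] := functional_choice _ (fun kN => freq kN.1 kN.2).
pose fix phi k := if k is k'.+1 then next (k, (phi k').+1) else next (0, 0).
exists phi; last by case=> [|k]; [exact: (nextP (0, 0)).2 | exact: (nextP (k.+1, _)).2].
by apply: (homo_ltn ltn_trans) => k; exact: (nextP (k.+1, _)).1.
Qed.

Lemma bounded_subseq_constant B (u : nat -> nat) : (forall n, u n <= B) ->
  exists2 phi, {homo phi : m n / m < n} & exists v, forall k, u (phi k) = v.
Proof.
elim: B u => [|B IH] u uB.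
  by exists id => //; exists 0 => k; apply/eqP; rewrite -leqn0.
case: (classic (forall N, exists n, N <= n /\ u n = B.+1)) => [freq|infreq].
  have [phi inc uphi] := subseq_of_frequently (fun _ n => u n = B.+1) (fun=> freq).
  by exists phi => //; exists B.+1.
have [N uN] : exists N, forall n, N <= n -> u n <= B.
  apply: NNPP => noN; apply: infreq => N; apply: NNPP => noB; apply: noN.
  exists N => n Nn; move: (uB n); rewrite leq_eqVlt ltnS => /orP[/eqP un|//].
  by case: noB; exists n.
have [phi inc [v uv]] := IH (fun n => u (n + N)) (fun n => uN _ (leq_addl _ _)).
by exists (fun k => phi k + N); [move=> m n /inc; rewrite ltn_add2r | exists v].
Qed.

Lemma diagonal_subseq (u : nat -> nat -> nat) (B : nat -> nat) :
  (forall j n, u j n <= B j) ->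
  exists2 phi, {homo phi : m n / m < n} &
    forall j, exists v, eventually (fun k => u j (phi k) = v).
Proof.
move=> uB.
have selection j psi : exists sg, {homo sg : m n / m < n} /\
    exists v, forall k, u j (psi (sg k)) = v.
  by have [sg ? ?] := @bounded_subseq_constant (B j) _ (fun n => uB j (psi n)); exists sg.
have [sel selP] := functional_choice _ (fun jpsi => selection jpsi.1 jpsi.2).
(* Phi j.+1 refines Phi j and freezes u j; from index j on, the diagonal
   k |-> Phi k.+1 k runs through a subsequence of Phi j.+1. *)
pose fix Phi j := if j is j'.+1 then Phi j' \o sel (j', Phi j') else id.
have Phi_inc j : {homo Phi j : m n / m < n}.
  by elim: j => //= j IH m n /(selP (j, Phi j)).1 /IH.
have Phi_refines j i k : j <= i -> exists m, Phi i k = Phi j m.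
  elim: i k => [|i IH] k; first by rewrite leqn0 => /eqP->; exists k.
  by rewrite leq_eqVlt ltnS => /orP[/eqP->|/IH]; [exists k | apply].
exists (fun k => Phi k.+1 k).
  apply: (homo_ltn ltn_trans) => k.
  change (Phi k.+1 k < Phi k.+1 (sel (k.+1, Phi k.+1) k.+1)); apply: Phi_inc.
  exact: homo_ltn_leq_id (selP (k.+1, _)).1 k.+1.
move=> j; have [v uv] := (selP (j, Phi j)).2; exists v.
apply/eventuallyP; exists j => k jk.
by have [m ->] := Phi_refines j.+1 k.+1 k jk; apply: uv.
Qed.

Lemma subseq_diverges_or_bounded (u : nat -> Z) :
  exists2 phi, {homo phi : m n / m < n} &
    (forall M, eventually (fun k => (M <= u (phi k))%Z)) \/
    exists M, forall k, (u (phi k) <= M)%Z.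
Proof.
case: (classic (forall M N, exists n, N <= n /\ (M <= u n)%Z)) => [unbdd|bdd].
  have [phi inc uphi] :=
    subseq_of_frequently (fun k n => Z.of_nat k <= u n)%Z (fun k => unbdd (Z.of_nat k)).
  exists phi => //; left => M; apply/eventuallyP; exists (Z.to_nat M) => k kM.
  by have := uphi k; lia.
have [M [N uMN]] : exists M N, forall n, N <= n -> (u n < M)%Z.
  apply: NNPP => noMN; apply: bdd => M N; apply: NNPP => noN; apply: noMN.
  by exists M, N => n Nn; apply: NNPP => unM; apply: noN; exists n; split=> //; lia.
exists (fun k => k + N); first by move=> m n; rewrite ltn_add2r.
by right; exists M => k; have := uMN (k + N) (leq_addl _ _); lia.
Qed.

Lemma subseq_trichotomy (u : nat -> Z) :
  exists2 phi, {homo phi : m n / m < n} &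
    [\/ forall M, eventually (fun k => (M <= u (phi k))%Z),
        forall M, eventually (fun k => (u (phi k) <= M)%Z) |
        exists u0, forall k, u (phi k) = u0].
Proof.
have [p1 inc1 [up|[M uM]]] := subseq_diverges_or_bounded u.
  by exists p1 => //; constructor 1.
have [p2 inc2 [down|[L uL]]] := subseq_diverges_or_bounded (fun k => - u (p1 k))%Z.
  exists (p1 \o p2); first by move=> m n /inc2/inc1.
  by constructor 2 => K; apply: filter_imp (down (- K)%Z) => k /=; lia.
have bounded n : Z.to_nat (u (p1 (p2 n)) + L) <= Z.to_nat (M + L).
  by have := uM (p2 n); have := uL n; lia.
have [p3 inc3 [v uv]] := @bounded_subseq_constant _ _ bounded.
exists (p1 \o p2 \o p3); first by move=> m n /inc3/inc2/inc1.
by constructor 3; exists (Z.of_nat v - L)%Z => k /=; have := uv k; have := uL (p3 k); lia.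
Qed.

End Subsequences.

Section FellConvergence.
Context {T : Type}.
Implicit Types (Sn : nat -> T -> Prop) (C : T -> Prop).

Lemma fell_convE Sn C :
  fell_conv Sn C <-> forall z, eventually (fun n => Sn n z <-> C z).
Proof. by split=> h z; apply/eventuallyP; apply: h. Qed.

Lemma fell_limitP {Sn C} : fell_conv Sn C ->
  forall z, C z <-> eventually (fun n => Sn n z).
Proof.
move=> /fell_convE conv z; split=> [Cz|evS].
  by apply: filter_imp (conv z) => n [_]; apply.
by have [n [Sz [/(_ Sz)]]] := filter_ex (F := eventually) _ (filter_and _ _ evS (conv z)).
Qed.

Lemma fell_conv_subseq {Sn C phi} : {homo phi : m n / (m < n)%N} ->
  fell_conv Sn C -> fell_conv (fun k => Sn (phi k)) C.
Proof.
move=> inc /fell_convE conv; apply/fell_convE => z.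
exact: eventually_subseq_homo inc (conv z).
Qed.

Lemma fell_convergent_subseq {e : nat -> T} Sn : (forall z, exists j, e j = z) ->
  exists2 phi, {homo phi : m n / (m < n)%N} &
    exists C, fell_conv (fun k => Sn (phi k)) C.
Proof.
move=> e_onto; pose indic P := if excluded_middle_informative P then 1%N else 0%N.
have indic_le1 P : (indic P <= 1)%N by rewrite /indic; case: excluded_middle_informative.
have [phi inc stab] :=
  @diagonal_subseq _ (fun=> 1%N) (fun j n => indic_le1 (Sn n (e j))).
exists phi => //; exists (fun z => eventually (fun k => Sn (phi k) z)).
apply/fell_convE => z; have [j <-] := e_onto z; have [v ev] := stab j.
have [Sev|Snev] : eventually (fun k => Sn (phi k) (e j)) \/
                  eventually (fun k => ~ Sn (phi k) (e j)).
  rewrite /indic in ev; case: (v =P 1%N) => [v1|v_ne1]; [left|right].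
    by apply: filter_imp ev => k; case: excluded_middle_informative => // _ /esym; rewrite v1.
  by apply: filter_imp ev => k; case: excluded_middle_informative => // _ /esym.
  by apply: filter_imp (Sev) => k Sk; split.
apply: filter_imp (Snev) => k nS; split=> // evS.
by have [m []] := filter_ex (F := eventually) _ (filter_and _ _ evS Snev).
Qed.

End FellConvergence.

Section Horofunctions.
Local Open Scope R_scope.
Context {G : groupType} {S : seq G} (hS : generates S).
Local Notation d := (word_dist S).
Local Notation o := (@monoid.one G).
Local Notation dR := (fun y w => INR (word_dist S y w)).
Local Notation b z := (busemann dR o z).

Lemma busemann_lipschitz z y w : Rabs (b z y - b z w) <= dR y w.
Proof.
have := le_INR _ _ (leP (word_dist_triangle hS z y w)).
have := le_INR _ _ (leP (word_dist_triangle hS z w y)).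
rewrite !plus_INR (word_dist_sym hS w y) /busemann => ? ?.
by apply: Rabs_le; lra.
Qed.

Lemma busemann_bound z y : Rabs (b z y) <= INR (d y o).
Proof.
by have := busemann_lipschitz z y o; rewrite {2}/busemann Rminus_diag Rminus_0_r.
Qed.

Lemma busemann_convergent_subseq (z : nat -> G) :
  exists2 phi, {homo phi : m n / (m < n)%N} &
    exists th, forall y, eventually (fun k => b (z (phi k)) y = th y).
Proof.
have [e e_onto] := enum_of_generates hS.
(* Shifted by |y|, the Busemann value at y is a natural number at most 2|y|. *)
have shifted_le j n : (d (z n) (e j) + d (e j) o - d (z n) o <= 2 * d (e j) o)%N.
  have := word_dist_triangle hS (z n) o (e j); have := word_dist_triangle hS (z n) (e j) o.
  by rewrite (word_dist_sym hS o); lia.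
have [phi inc stab] := @diagonal_subseq _ (fun j => 2 * d (e j) o)%N shifted_le.
exists phi => //.
apply: (functional_choice (fun y t => eventually (fun k => b (z (phi k)) y = t))) => y.
have [j <-] := e_onto y; have [v ev] := stab j.
exists (INR v - INR (d (e j) o)); apply: filter_imp ev => k <-.
rewrite minus_INR ?plus_INR /busemann; first lra.
exact/leP/word_dist_triangle.
Qed.

Lemma horo_boundary_of_busemann_limit (z : nat -> G) (th : G -> R) :
  (forall M, eventually (fun k => (M <= d (z k) o)%N)) ->
  (forall y, eventually (fun k => b (z k) y = th y)) ->
  horo_boundary dR o th.
Proof.
move=> z_inf zth; split; [split; [|split]|].
- move=> y w.
  have [k [<- <-]] := filter_ex (F := eventually) _ (filter_and _ _ (zth y) (zth w)).
  exact: busemann_lipschitz.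
- by have [k <-] := filter_ex (F := eventually) _ (zth o); apply: Rminus_diag.
- move=> F eps eps_gt0.
  have [k zkF] := filter_ex (F := eventually) _ (eventually_forall_in F _ zth).
  by exists (z k) => y /zkF ->; rewrite Rminus_diag Rabs_R0.
(* th = b x is minimal at x, whereas for z k far away some generator step from x
   strictly decreases b (z k). *)
case=> x thx.
have [k [x_far agree]] := filter_ex (F := eventually) _ (filter_and _ _ (z_inf (d x o).+1)
  (eventually_forall_in (x :: List.map (monoid.mul x) (gens S)) _ zth)).
have at_x := agree x (or_introl erefl).
rewrite thx /busemann word_dist_xx /= in at_x.
have x_far_R := le_INR _ _ (leP x_far); rewrite S_INR in x_far_R.
have zx_gt0 : (0 < d x (z k))%N.
  by rewrite lt0n (word_dist_sym hS); apply/eqP => zx0; rewrite zx0 /= in at_x; lra.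
have [s s_gen closer] := word_dist_step_closer hS _ _ zx_gt0.
have := agree (monoid.mul x s) (or_intror (List.in_map _ _ _ (mem_In s_gen))).
rewrite thx /busemann !(word_dist_sym hS (z k)) in at_x *.
by have := lt_INR _ _ (ltP closer); have := pos_INR (d x (monoid.mul x s)); lra.
Qed.

End Horofunctions.

Lemma diamondP (G G' : groupType) (S : seq G) (S' : seq G') f r p q :
  diamond S S' f r p q <->
  (word_dist S p.1 q.1 <= r)%N /\
  (word_dist S' p.2 q.2 <= f (r - word_dist S p.1 q.1))%N.
Proof.
split=> [[t [tr [-> qt]]]|[pq fq]]; first by rewrite leq_subr subKn.
by exists (r - word_dist S p.1 q.1)%N; rewrite subKn ?leq_subr.
Qed.

Lemma horoball_pair_horoE (H H' : Type) (c : R) th th' delta (z : H * H') : 0 < c ->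
  horoball (pair_horo c th th') delta z <-> c * th z.1 + th' z.2 <= c * delta.
Proof.
move=> c_gt0; rewrite /horoball /pair_horo.
have -> : c * th z.1 + th' z.2 = c * (th z.1 + th' z.2 / c) by field; lra.
by split=> [|/Rmult_le_reg_l]; [apply: Rmult_le_compat_l; lra | apply].
Qed.

Section Diamonds.
Local Open Scope R_scope.
Context {G G' : groupType} {S : seq G} {S' : seq G'}.
Hypotheses (hS : generates S) (hS' : generates S').
Variables (f : nat -> nat) (c : R).
Hypothesis c_gt0 : 0 < c.
Hypothesis f_mono : {homo f : m n / (m <= n)%N}.
Hypothesis f_quasi_linear : forall m,
  eventually (fun n => Rabs (INR (f (n + m)) - INR (f n) - c * INR m) <= 1).
Variables (r : nat -> nat) (x : nat -> G) (x' : nat -> G').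

Local Notation o := (@monoid.one G).
Local Notation o' := (@monoid.one G').
Local Notation len g := (word_dist S g o).
Local Notation len' g := (word_dist S' g o').
Local Notation b n := (busemann (fun y w => INR (word_dist S y w)) o (x n)).
Local Notation b' n := (busemann (fun y w => INR (word_dist S' y w)) o' (x' n)).
Local Notation D n := (diamond S S' f (r n) (x n, x' n)).
Local Notation slack n := (Z.of_nat (r n) - Z.of_nat (len (x n)))%Z.
Local Notation depth n := (Z.of_nat (f (r n - len (x n))) - Z.of_nat (len' (x' n)))%Z.

Lemma quasi_linear_increment M : exists N, forall p q, (N <= p)%N -> (N <= q)%N ->
  (p <= q + M)%N -> (q <= p + M)%N ->
  Rabs (INR (f p) - INR (f q) - c * (INR p - INR q)) <= 1.
Proof.
have /eventuallyP[N fN] := eventually_forall_leq M f_quasi_linear.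
exists N => p q Np Nq pM qM.
wlog le_qp : p q Np Nq pM qM / (q <= p)%N => [sym|].
  case: (leqP q p) => [|/ltnW] le; first exact: sym.
  rewrite -Rabs_Ropp; have := sym q p Nq Np qM pM le.
  by congr (Rabs _ <= 1); ring.
have := fN q Nq (p - q)%N; rewrite subnKC // minus_INR; last exact/leP.
by apply; lia.
Qed.

Lemma fiber_radius_estimate y : exists N : Z, forall n, (N <= slack n)%Z ->
  (word_dist S (x n) y <= r n)%N /\
  Rabs (INR (f (r n - word_dist S (x n) y)) - INR (f (r n - len (x n))) + c * b n y) <= 1.
Proof.
have [N fN] := quasi_linear_increment (len y).
exists (Z.of_nat (N + len y)) => n slack_n.
have le_xo := word_dist_triangle hS (x n) y o.
have := word_dist_triangle hS (x n) o y; rewrite (word_dist_sym hS o) => le_xy.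
split; first lia.
set p := (r n - word_dist S (x n) y)%N; set q := (r n - len (x n))%N.
have -> : INR (f p) - INR (f q) + c * b n y = INR (f p) - INR (f q) - c * (INR p - INR q).
  by rewrite /p /q /busemann !minus_INR; try (apply/leP; lia); ring.
by apply: fN; rewrite /p /q; lia.
Qed.

Lemma diamond_estimate y y' : exists N : Z, forall n, (N <= slack n)%Z ->
  (c * b n y + b' n y' <= IZR (depth n) - 1 -> D n (y, y')) /\
  (D n (y, y') -> c * b n y + b' n y' <= IZR (depth n) + 1).
Proof.
have [N est] := fiber_radius_estimate y.
exists N => n /est[close /Rabs_le_between[est_lo est_hi]].
rewrite diamondP /= minus_IZR -!INR_IZR_INZ /busemann in est_lo est_hi *.
split=> [deep|[_ far]].
  by split=> //; apply/leP/INR_le; lra.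
by have := le_INR _ _ (leP far); lra.
Qed.

Lemma weighted_busemann_bound n y y' :
  Rabs (c * b n y + b' n y') <= c * INR (len y) + INR (len' y').
Proof.
have /Rabs_le_between[lo hi] := busemann_bound hS (x n) y.
have /Rabs_le_between[lo' hi'] := busemann_bound hS' (x' n) y'.
by apply/Rabs_le_between; split; nra.
Qed.

Lemma diamond_stabilizing_subseq : exists2 phi, {homo phi : m n / (m < n)%N} &
  exists th th' C, [/\ forall y, eventually (fun k => b (phi k) y = th y),
    forall y', eventually (fun k => b' (phi k) y' = th' y') &
    fell_conv (fun k => D (phi k)) C].
Proof.
have [phi1 inc1 [th hth]] := busemann_convergent_subseq hS x.
have [phi2 inc2 [th' hth']] := busemann_convergent_subseq hS' (x' \o phi1).
have [e e_onto] := enum_of_generates hS; have [e' e'_onto] := enum_of_generates hS'.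
have [ep ep_onto] := enum_prod e_onto e'_onto.
have [phi3 inc3 [C hC]] := fell_convergent_subseq (fun k => D (phi1 (phi2 k))) ep_onto.
exists (phi1 \o phi2 \o phi3); first by move=> m n /inc3/inc2/inc1.
exists th, th', C; split=> // [y|y'].
  by apply: (eventually_subseq_homo (phi := phi2 \o phi3)) (hth y) => m n /inc3/inc2.
exact: eventually_subseq_homo inc3 (hth' y').
Qed.

Variable C : G * G' -> Prop.
Hypothesis fell_C : fell_conv (fun n => D n) C.

Lemma diamond_limit_empty_of_bounded_slack phi M : {homo phi : m n / (m < n)%N} ->
  (forall M', eventually (fun n => (M' <= len' (x' n))%N)) ->
  (forall k, (slack (phi k) <= M)%Z) -> forall z, ~ C z.
Proof.
move=> inc x'_far bdd [y y'] /(fell_limitP (fell_conv_subseq inc fell_C)) inD.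
pose B := f (Z.to_nat M + len y).
have [k [/diamondP[/= _ fiber] far]] := filter_ex (F := eventually) _
  (filter_and _ _ inD (eventually_subseq_homo inc (x'_far (B + len' y').+1))).
have := word_dist_triangle hS (x (phi k)) y o.
have := word_dist_triangle hS' (x' (phi k)) y' o'.
have := f_mono (r (phi k) - word_dist S (x (phi k)) y)%N (Z.to_nat M + len y)%N.
by have := bdd k; rewrite /B in far; lia.
Qed.

Lemma diamond_limit_full_of_depth_pinfty phi : {homo phi : m n / (m < n)%N} ->
  (forall N, eventually (fun k => (N <= slack (phi k))%Z)) ->
  (forall N, eventually (fun k => (N <= depth (phi k))%Z)) -> forall z, C z.
Proof.
move=> inc slack_far deep [y y']; apply/(fell_limitP (fell_conv_subseq inc fell_C)).
have [N est] := diamond_estimate y y'.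
have [up_gt _] := archimed (c * INR (len y) + INR (len' y')).
apply: filter_imp (filter_and _ _ (slack_far N)
  (deep (up (c * INR (len y) + INR (len' y')) + 1)%Z)).
move=> k [/est[inD _] /IZR_le]; rewrite plus_IZR => deep_k; apply: inD.
by have /Rabs_le_between := weighted_busemann_bound (phi k) y y'; lra.
Qed.

Lemma diamond_limit_empty_of_depth_ninfty phi : {homo phi : m n / (m < n)%N} ->
  (forall N, eventually (fun k => (N <= slack (phi k))%Z)) ->
  (forall N, eventually (fun k => (depth (phi k) <= N)%Z)) -> forall z, ~ C z.
Proof.
move=> inc slack_far shallow [y y'] /(fell_limitP (fell_conv_subseq inc fell_C)) inD.
have [N est] := diamond_estimate y y'.
have [up_gt _] := archimed (c * INR (len y) + INR (len' y')).
have [k [[/est[_ outD] inDk] shallow_k]] := filter_ex (F := eventually) _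
  (filter_and _ _ (filter_and _ _ (slack_far N) inD)
     (shallow (- up (c * INR (len y) + INR (len' y')) - 2)%Z)).
have := outD inDk; have := IZR_le _ _ shallow_k; rewrite !minus_IZR opp_IZR.
by have /Rabs_le_between := weighted_busemann_bound (phi k) y y'; lra.
Qed.

Variables (th : G -> R) (th' : G' -> R).
Hypothesis busemann_th : forall y, eventually (fun n => b n y = th y).
Hypothesis busemann_th' : forall y', eventually (fun n => b' n y' = th' y').

Lemma diamond_limit_horoball_of_constant_depth phi u0 : {homo phi : m n / (m < n)%N} ->
  (forall N, eventually (fun k => (N <= slack (phi k))%Z)) ->
  (forall k, depth (phi k) = u0) ->
  exists delta,
    (forall z, horoball (pair_horo c th th') (delta - 1 / c) z -> C z) /\
    (forall z, C z -> horoball (pair_horo c th th') (delta + 1 / c) z).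
Proof.
move=> inc slack_far depth_u0; exists (IZR u0 / c).
have inC := fell_limitP (fell_conv_subseq inc fell_C).
have agree y y' : eventually (fun k => b (phi k) y = th y /\ b' (phi k) y' = th' y').
  exact: filter_and (eventually_subseq_homo inc (busemann_th y))
    (eventually_subseq_homo inc (busemann_th' y')).
have scale_lo : c * (IZR u0 / c - 1 / c) = IZR u0 - 1 by field; lra.
have scale_hi : c * (IZR u0 / c + 1 / c) = IZR u0 + 1 by field; lra.
split=> -[y y']; rewrite horoball_pair_horoE // ?scale_lo ?scale_hi /=.
  move=> below; apply/inC; have [N est] := diamond_estimate y y'.
  apply: filter_imp (filter_and _ _ (slack_far N) (agree y y')).
  move=> k [/est[inD _] [bk bk']].
  by apply: inD; rewrite depth_u0 bk bk'; lra.
move=> /inC inD; have [N est] := diamond_estimate y y'.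
have [k [[/est[_ outD] inDk] [bk bk']]] := filter_ex (F := eventually) _
  (filter_and _ _ (filter_and _ _ (slack_far N) inD) (agree y y')).
by have := outD inDk; rewrite depth_u0 bk bk'; lra.
Qed.

Lemma diamond_limit_shape :
  (forall M, eventually (fun n => (M <= len' (x' n))%N)) ->
  (forall z, ~ C z) \/ (forall z, C z) \/
  exists delta,
    (forall z, horoball (pair_horo c th th') (delta - 1 / c) z -> C z) /\
    (forall z, C z -> horoball (pair_horo c th th') (delta + 1 / c) z).
Proof.
move=> x'_far.
have [phi inc [slack_far|[M bdd]]] := subseq_diverges_or_bounded (fun n => slack n);
  last by left; apply: diamond_limit_empty_of_bounded_slack inc x'_far bdd.
have [psi inc' cases] := subseq_trichotomy (fun k => depth (phi k)).
have inc2 : {homo phi \o psi : m n / (m < n)%N} by move=> m n /inc'/inc.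
have slack_far' N : eventually (fun k => (N <= slack (phi (psi k)))%Z).
  exact: eventually_subseq_homo inc' (slack_far N).
case: cases => [deep|shallow|[u0 depth_u0]].
- by right; left; apply: diamond_limit_full_of_depth_pinfty inc2 slack_far' deep.
- by left; apply: diamond_limit_empty_of_depth_ninfty inc2 slack_far' shallow.
- by right; right; apply: diamond_limit_horoball_of_constant_depth inc2 slack_far' depth_u0.
Qed.

End Diamonds.

Local Open Scope R_scope.

Theorem lemma3p3
  (G G' : groupType) (S : seq G) (S' : seq G')
  (hS : generates S) (hS' : generates S')
  (a a' : R)
  (ha : growth_rate S a) (ha' : growth_rate S' a')
  (ha1 : (1 < a)) (ha1' : (1 < a'))
  (f : nat -> nat) (r : nat -> nat)
  (hf_mono : forall m n, (m <= n)%nat -> (f m <= f n)%nat)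
  (hf0 : f 0%nat = 0%nat)
  (hr : forall m n, (m < n)%nat -> (r m < r n)%nat)
  (hratio : exists k K : R, (0 < k) /\
     forall n, (k <= INR (ball_vol S' (f (r n))) / INR (ball_vol S (r n)) <= K))
  (hf_lin : forall m, exists N, forall n, (N <= n)%nat ->
     (Rabs (INR (f (n + m)%nat) - INR (f n) - (ln a / ln a') * INR m) <= 1))
  (x : nat -> G) (x' : nat -> G')
  (hx : forall M, exists N, forall n, (N <= n)%nat ->
          (M <= word_dist S (x n) (@monoid.one G))%nat)
  (hx' : forall M, exists N, forall n, (N <= n)%nat ->
          (M <= word_dist S' (x' n) (@monoid.one G'))%nat) :
  let c := (ln a / ln a') in
  exists phi : nat -> nat, (forall m n, (m < n)%nat -> (phi m < phi n)%nat) /\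
  exists C : G * G' -> Prop,
    fell_conv (fun k => diamond S S' f (r (phi k)) (x (phi k), x' (phi k))) C /\
    ( (forall z, ~ C z)
    \/ (forall z, C z)
    \/ exists (th : G -> R) (th' : G' -> R) (delta : R),
         horo_boundary (fun y z => INR (word_dist S y z)) (@monoid.one G) th /\
         horo_boundary (fun y z => INR (word_dist S' y z)) (@monoid.one G') th' /\
         (forall z, horoball (pair_horo c th th') (delta - 2 / c) z -> C z) /\
         (forall z, C z -> horoball (pair_horo c th th') (delta + 1 / c) z) ).
Proof.
move=> c.
(* Only 1 < a, a' (so that c > 0), the monotonicity and quasi-linearity of f and
   the divergence of x, x' are needed. *)
have c_gt0 : 0 < c.
  by apply: Rdiv_lt_0_compat; rewrite -ln_1; apply: ln_increasing; lra.
have [phi inc [th [th' [C [hth hth' hC]]]]] := diamond_stabilizing_subseq hS hS' f r x x'.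
have x_far M : eventually (fun k => (M <= word_dist S (x (phi k)) monoid.one)%N).
  exact: eventually_subseq_homo inc (proj2 (eventuallyP _) (hx M)).
have x'_far M : eventually (fun k => (M <= word_dist S' (x' (phi k)) monoid.one)%N).
  exact: eventually_subseq_homo inc (proj2 (eventuallyP _) (hx' M)).
have f_quasi_linear m := proj2 (eventuallyP _) (hf_lin m).
exists phi; split=> //; exists C; split=> //.
have [empty|[full|[delta [lower upper]]]] := diamond_limit_shape hS hS' _ _ c_gt0 hf_mono
  f_quasi_linear (r \o phi) (x \o phi) (x' \o phi) _ hC _ _ hth hth' x'_far.
- by left.
- by right; left.
right; right; exists th, th', delta.
split; first exact: horo_boundary_of_busemann_limit hS _ _ x_far hth.
split; first exact: horo_boundary_of_busemann_limit hS' _ _ x'_far hth'.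
split=> // z hz; apply: lower; rewrite /horoball in hz *.
by have := Rinv_0_lt_compat _ c_gt0; rewrite /Rdiv in hz *; lra.
Qed.
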